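(* Fix $\omega\in\{0,\infty\}$ and a network (finite directed multigraph with edge set $\mathcal E$, OD pairs $\mathcal I$, pairwise disjoint nonempty finite path sets $\mathcal P^i$) with nondecreasing edge functions $g_e:[0,\infty)\to[0,\infty)$, $g_e(0)=0$. Let $g:(0,\infty)\to(0,\infty)$ be $\rho$-regularly varying at $\omega$ with $\rho>0$ (i.e. $\lim_{t\to\omega}g(tx)/g(t)=x^\rho$ for all $x>0$) and such that $\alpha_e=\lim_{x\to\omega}g_e(x)/g(x)\in[0,\infty]$ exists for all $e$. Let $\alpha_p=\max_{e\in p}\alpha_e$ and $\alpha^i=\min_{p\in\mathcal P^i}\alpha_p$. Let $m_n=M_n\lambda_n$ be inflow vectors with $M_n>0$, $\lambda_n\in\Delta(\mathcal I)$, such that: (a) $M_n\to\omega$ and $\lambda_n\to\lambda\in\Delta(\mathcal I)$; (b) every OD pair has a path $p$ with $\alpha_p<\infty$; (c) there is $i\in\mathcal I$ with $0<\alpha^i<\infty$ and $\lambda^i>0$. Let $G_n=\min_{y\in\mathcal Y}\sum_{e\in\mathcal E}g_e(x_e(y,m_n))$. Then $\lim_{n\to\infty}G_n/g(M_n)=V_\rho(\lambda)$, where $V_\rho(\lambda)=\min_{y\in\mathcal Y}\sum_{e\in\mathcal E}\alpha_e\,\zeta_e(y,\lambda)^\rho\in(0,\infty)$ with the convention $\alpha_e\zeta_e^\rho=0$ when $\alpha_e=\infty$ and $\zeta_e=0$. Moreover, if $\bar y_n$ is a sequence of optimal solutions for $G_n$, every limit point of $(\bar y_n)$ is optimal fo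r $V_\rho(\lambda)$.
   Context: $\Delta(\mathcal I)$ is the probability simplex on $\mathcal I$. A normalized traffic allocation is $y=(y^i)_{i\in\mathcal I}$ with $y^i\in\Delta(\mathcal P^i)$ (nonnegative, summing to $1$); $\mathcal Y=\prod_i\Delta(\mathcal P^i)$. For $e\in\mathcal E$, $z_e^i(y)=\sum_{p\in\mathcal P^i,\,p\ni e}y^i_p$, $\zeta_e(y,\lambda)=\sum_i\lambda^iz_e^i(y)$, and for an inflow vector $m=M\lambda$, $x_e(y,m)=M\zeta_e(y,\lambda)=\sum_i m^iz^i_e(y)$. *)

From HB Require Import structures.
From mathcomp Require Import all_boot all_order all_algebra.
From mathcomp Require Import all_classical all_reals all_analysis.
Set Implicit Arguments. Unset Strict Implicit. Unset Printing Implicit Defensive.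
Import Order.TTheory GRing.Theory Num.Theory.
Import numFieldNormedType.Exports.
Local Open Scope classical_set_scope.
Local Open Scope ring_scope.

(* The point omega in {0, +oo}: [true] encodes +oo, [false] encodes 0.
   Limits "t -> omega" are taken along t -> +oo, resp. t -> 0^+
   (functions g, g_e are only defined on (0,oo) resp. [0,oo)). *)
Definition omega_nbhs (R : realType) (b : bool) : set_system R :=
  if b then pinfty_nbhs R else at_right (0 : R).

Fixpoint walk_from (V E : eqType) (tail head : E -> V) (u : V) (s : seq E) (v : V)
  : bool :=
  match s with
  | [::] => u == v
  | e :: s' => (tail e == u) && walk_from tail head (head e) s' v
  end.

Section Flows.
Variables (R : realType) (E I Pth : finType) (owner : Pth -> I) (route : Pth -> seq E).

Definition simplex (lam : I -> R) : Prop :=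
  (forall i, 0 <= lam i) /\ \sum_i lam i = 1.

Definition allocs : set (Pth -> R) :=
  [set y | (forall p, 0 <= y p) /\ forall i, \sum_(p | owner p == i) y p = 1].

Definition zfl (y : Pth -> R) (e : E) (i : I) : R :=
  \sum_(p | (owner p == i) && (e \in route p)) y p.

Definition zeta (y : Pth -> R) (lam : I -> R) (e : E) : R :=
  \sum_i lam i * zfl y e i.

Definition xload (y : Pth -> R) (m : I -> R) (e : E) : R :=
  \sum_i m i * zfl y e i.

Definition alpha_path (alpha : E -> \bar R) (p : Pth) : \bar R :=
  \big[maxe/0%E]_(e <- route p) alpha e.

Definition alpha_od (alpha : E -> \bar R) (i : I) : \bar R :=
  \big[mine/+oo%E]_(p | owner p == i) alpha_path alpha p.

Definition cost (ge : E -> R -> R) (m : I -> R) (y : Pth -> R) : R :=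
  \sum_e ge e (xload y m e).

(* G(m) = min_{y in Y} cost  (taken as infimum; equals the min when attained) *)
Definition Gopt (ge : E -> R -> R) (m : I -> R) : R :=
  inf [set cost ge m y | y in allocs].

(* limit objective  sum_e alpha_e zeta_e(y,lambda)^rho in \bar R;
   ereal multiplication satisfies +oo * 0 = 0, which is the stated convention *)
Definition Vobj (alpha : E -> \bar R) (rho : R) (lam : I -> R) (y : Pth -> R) : \bar R :=
  (\sum_e alpha e * ((zeta y lam e) `^ rho)%:E)%E.

Definition Vrho (alpha : E -> \bar R) (rho : R) (lam : I -> R) : \bar R :=
  ereal_inf [set Vobj alpha rho lam y | y in allocs].

End Flows.

From Pilot Require Import Defs.
From HB Require Import structures.
From mathcomp Require Import all_boot all_order all_algebra.
From mathcomp Require Import all_classical all_reals all_analysis.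
From mathcomp Require Import lra.
Import Order.TTheory GRing.Theory Num.Theory.
Import numFieldNormedType.Exports.
Local Open Scope classical_set_scope.
Local Open Scope ring_scope.

(* For an allocation y write zeta_e(y, lambda) for the normalized load of edge e, so that
   the cost of y at inflow M lambda is sum_e g_e(M zeta_e(y, lambda)).  Regular variation
   gives g_e(M_n z) / g(M_n) --> alpha_e z^rho for every fixed z > 0, and monotonicity of g_e
   transfers this to loads z_n --> z: along any filter as a lower bound, and along n as an
   upper bound when alpha_e < oo or the load vanishes identically.  Evaluating the cost at a
   near-optimal allocation of the limit problem then bounds G_n / g(M_n) from above by
   V_rho(lambda) + eps; the lower bound V_rho(lambda) - eps holds uniformly on the compact
   set of allocations, hence also for G_n.  The same lower bound along a convergent
   subsequence of optimal allocations shows that its limit is optimal.  Condition (b) makes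
   V_rho(lambda) finite and condition (c) makes it positive. *)

Section EventualSums.
Context {R : realType} {T : Type} {F : set_system T} {FF : Filter F}.

Lemma adde_lt_split (x y : \bar R) (c : R) :
  (0 <= x)%E -> (0 <= y)%E -> (x + y < c%:E)%E ->
  exists c1 c2, [/\ c = c1 + c2, (x < c1%:E)%E & (y < c2%:E)%E].
Proof.
case: x => [r||] //; case: y => [u||] // _ _; rewrite ?lte_fin //= => h.
exists (r + (c - r - u) / 2), (u + (c - r - u) / 2).
by split; rewrite ?lte_fin; lra.
Qed.

Lemma adde_gt_split (x y : \bar R) (c : R) :
  (0 <= x)%E -> (0 <= y)%E -> (c%:E < x + y)%E ->
  exists c1 c2, [/\ c = c1 + c2, (c1%:E < x)%E & (c2%:E < y)%E].
Proof.
case: x => [r||] //; case: y => [u||] //; rewrite ?lee_fin ?lte_fin //=.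
- move=> _ _ h; exists (r - (r + u - c) / 2), (u - (r + u - c) / 2).
  by split; rewrite ?lte_fin; lra.
- move=> r0 _ _; exists (r - 1), (c - r + 1).
  by split; rewrite ?ltry ?lte_fin //; lra.
- move=> _ u0 _; exists (c - u + 1), (u - 1).
  by split; rewrite ?ltry ?lte_fin //; lra.
- by move=> _ _ _; exists c, 0; split; rewrite ?addr0 ?ltry.
Qed.

Lemma near_sume_lt {J : Type} {s : seq J} {t : J -> \bar R} {f : J -> T -> R} :
  (forall j, (0 <= t j)%E) ->
  (forall j c, (t j < c%:E)%E -> \forall x \near F, f j x < c) ->
  forall c, (\sum_(j <- s) t j < c%:E)%E -> \forall x \near F, \sum_(j <- s) f j x < c.
Proof.
move=> t0 ft; elim: s => [|j s IH] c.
  by rewrite big_nil lte_fin => c0; apply: nearW => x; rewrite big_nil.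
rewrite big_cons => /adde_lt_split[||c1 [c2 [-> /ft fj /IH fs]]] //.
  by apply: sume_ge0 => i _; exact: t0.
by apply: filterS2 fj fs => x h1 h2; rewrite big_cons ltrD.
Qed.

Lemma near_sume_gt {J : Type} {s : seq J} {t : J -> \bar R} {f : J -> T -> R} :
  (forall j, (0 <= t j)%E) ->
  (forall j c, (c%:E < t j)%E -> \forall x \near F, c < f j x) ->
  forall c, (c%:E < \sum_(j <- s) t j)%E -> \forall x \near F, c < \sum_(j <- s) f j x.
Proof.
move=> t0 ft; elim: s => [|j s IH] c.
  by rewrite big_nil lte_fin => c0; apply: nearW => x; rewrite big_nil.
rewrite big_cons => /adde_gt_split[||c1 [c2 [-> /ft fj /IH fs]]] //.
  by apply: sume_ge0 => i _; exact: t0.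
by apply: filterS2 fj fs => x h1 h2; rewrite big_cons ltrD.
Qed.

End EventualSums.

Lemma cvge_near_lt {R : realFieldType} {T : Type} {F : set_system T} {FF : Filter F}
  {u : T -> \bar R} {l c : \bar R} :
  u @ F --> l -> (l < c)%E -> \forall t \near F, (u t < c)%E.
Proof.
move=> ul lc; apply: (ul [set x | (x < c)%E]); apply: open_nbhs_nbhs.
by split => //; exact: open_ereal_lt_ereal.
Qed.

Lemma cvge_near_gt {R : realFieldType} {T : Type} {F : set_system T} {FF : Filter F}
  {u : T -> \bar R} {l c : \bar R} :
  u @ F --> l -> (c < l)%E -> \forall t \near F, (c < u t)%E.
Proof.
move=> ul cl; apply: (ul [set x | (c < x)%E]); apply: open_nbhs_nbhs.
by split => //; exact: open_ereal_gt_ereal.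
Qed.

Lemma lte_dense_EFin {R : realFieldType} (x : R) (y : \bar R) :
  (x%:E < y)%E -> exists2 c, x < c & (c%:E < y)%E.
Proof.
case: y => [r||] //; last by exists (x + 1); rewrite ?ltry ?ltrDl.
by rewrite lte_fin => xr; exists ((x + r) / 2); rewrite ?lte_fin; lra.
Qed.

Section PowerFunction.
Context {R : realType} {rho : R}.
Hypothesis rho_gt0 : 0 < rho.

Lemma powR_invK (w : R) : 0 <= w -> (w `^ rho^-1) `^ rho = w.
Proof. by move=> w0; rewrite -powRrM mulVf ?gt_eqF // powRr1. Qed.

Lemma ltr_powR2r : {in Num.nneg &, {mono (fun x : R => x `^ rho) : x y / x < y}}.
Proof. exact/leW_mono_in/le_mono_in/gt0_ltr_powR. Qed.

End PowerFunction.

Lemma exists_gt_mulr_lt {R : realType} {a u c : R} :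
  a * u < c -> exists2 w, u < w & a * w < c.
Proof.
move=> auc; have aw : (fun w => a * w) @ u^'+ --> a * u.
  by apply: cvgMl_tmp; exact: cvg_within_filter cvg_id.
have [w [uw awc]] := filter_ex (filterI (nbhs_right_gt u) (cvgr_lt _ aw _ auc)).
by exists w.
Qed.

Lemma exists_lt_mulr_gt {R : realType} {a u c : R} :
  0 < u -> c < a * u -> exists2 w, 0 < w < u & c < a * w.
Proof.
move=> u0 cau; have aw : (fun w => a * w) @ u^'- --> a * u.
  by apply: cvgMl_tmp; exact: cvg_within_filter cvg_id.
have w0 : \forall w \near u^'-, 0 < w.
  by apply: (cvgr_gt _ (cvg_within_filter _ cvg_id)).
have [w [[wu w0'] cw]] :=
  filter_ex (filterI (filterI (nbhs_left_lt u) w0) (cvgr_gt _ aw _ cau)).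
by exists w; rewrite ?w0' ?wu.
Qed.

Lemma exists_summand_ge {R : realType} {T : finType} {P : pred T} {y : T -> R} :
  \sum_(t | P t) y t = 1 -> exists2 t, P t & (#|T|%:R + 1)^-1 <= y t.
Proof.
set k := (#|T|%:R + 1)^-1 => y1.
have [/existsP[t /andP[Pt kt]]|/existsPn small] := boolP [exists t, P t && (k <= y t)].
  by exists t.
have k_gt0 : 0 < k by rewrite invr_gt0 ltr_wpDl.
suff : (1 : R) < 1 by rewrite ltxx.
rewrite -[X in X < _]y1; apply: (@le_lt_trans _ _ (\sum_(t | P t) k)).
  by apply: ler_sum => t Pt; move: (small t); rewrite Pt -ltNge => /ltW.
rewrite sumr_const; apply: (@le_lt_trans _ _ (#|T|%:R * k)).
  by rewrite -[k *+ _]mulr_natl ler_pM2r // ler_nat max_card.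
by rewrite /k ltr_pdivrMr ?ltr_wpDl // mul1r ltrDl.
Qed.

(** * Regular variation along the inflow sequence *)

Lemma near_omega_gt0 (R : realType) (omega : bool) :
  \forall x \near omega_nbhs omega, (0 : R) < x.
Proof. by case: omega; [exact: nbhs_pinfty_gt | exact: nbhs_right_gt]. Qed.

Instance omega_nbhs_proper (R : realType) (omega : bool) :
  ProperFilter (omega_nbhs omega : set_system R).
Proof. by case: omega; [exact: proper_pinfty_nbhs | exact: at_right_proper_filter]. Qed.

Lemma omega_nbhs_scale {R : realType} (omega : bool) (z : R) : 0 < z ->
  (fun x => x * z) @ omega_nbhs omega --> omega_nbhs omega.
Proof.
move=> z0; case: omega => /=; first exact: (@gt0_cvgMly R _ _ z id z0 cvg_id).
move=> P /= P_near; rewrite /at_right /within /= in P_near.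
have to0 : (fun x => x * z) @ 0^'+ --> (0 : R).
  by rewrite -[X in _ --> X](mul0r z); apply: cvgMr_tmp; exact: cvg_within_filter cvg_id.
have Pz : \forall x \near 0^'+, 0 < x * z -> P (x * z) := to0 _ P_near.
change (\forall x \near 0^'+, P (x * z)).
by apply: filterS2 Pz (nbhs_right_gt 0) => x Px x_gt0; apply: Px; exact: mulr_gt0.
Qed.

Section RegularVariation.
Context {R : realType} {omega : bool} {g : R -> R} {rho : R} {M : nat -> R}.
Hypotheses (rho_gt0 : 0 < rho) (g_gt0 : forall x, 0 < x -> 0 < g x)
  (g_rv : forall x, 0 < x -> (fun t => g (t * x) / g t) @ omega_nbhs omega --> x `^ rho)
  (M_gt0 : forall n, 0 < M n) (M_cvg : M @ \oo --> omega_nbhs omega).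
Context {f : R -> R} {a : \bar R}.
Hypotheses (f_ge0 : forall x, 0 <= x -> 0 <= f x)
  (f_mono : forall x y, 0 <= x -> x <= y -> f x <= f y)
  (f_ratio : (fun x => (f x / g x)%:E) @ omega_nbhs omega --> a).

Lemma ratio_lim_ge0 : (0 <= a)%E.
Proof.
apply: (closed_cvg _ (@closed_ereal_le_ereal _ 0) _ _ f_ratio).
near=> x; have x0 : 0 < x by near: x; exact: near_omega_gt0.
by rewrite /= lee_fin divr_ge0 ?f_ge0 ?ltW ?g_gt0.
Unshelve. all: by end_near.
Qed.

Lemma cvg_ratio_scaled (z : R) : 0 < z ->
  (fun n => (f (M n * z) / g (M n))%:E) @ \oo --> (a * (z `^ rho)%:E)%E.
Proof.
move=> z0; have Mz := cvg_comp _ _ M_cvg (omega_nbhs_scale _ _ z0).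
have fz : (fun n => (f (M n * z) / g (M n * z))%:E) @ \oo --> a := cvg_comp _ _ Mz f_ratio.
have gz : (fun n => (g (M n * z) / g (M n))%:E) @ \oo --> (z `^ rho)%:E.
  by apply/fine_cvgP; split; [exact: nearW | exact: (cvg_comp _ _ M_cvg (g_rv _ z0))].
have az : (a *? (z `^ rho)%:E)%E.
  have [a_fin|a_inf] := boolP (a \is a fin_num); first exact: mule_def_fin.
  by apply: mule_def_infty_neq0; rewrite // eqe gt_eqF // powR_gt0.
apply: cvg_trans (cvgeM az fz gz); apply: near_eq_cvg; apply: nearW => n /=.
by rewrite -EFinM mulrA divfK // gt_eqF // g_gt0 // mulr_gt0.
Qed.

Lemma ratio_liminf (T : Type) (Q : set_system T) {FQ : Filter Q}
  (N : T -> nat) (Z : T -> R) (z : R) :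
  N @ Q --> \oo -> Z @ Q --> z -> (\forall q \near Q, 0 <= Z q) -> 0 <= z ->
  forall c, (c%:E < a * (z `^ rho)%:E)%E ->
  \forall q \near Q, c < f (M (N q) * Z q) / g (M (N q)).
Proof.
move=> N_cvg Z_cvg Z_ge0 z_ge0 c ltc.
have [z_eq0|z_neq0] := eqVneq z 0.
  move: ltc; rewrite z_eq0 powR0 ?gt_eqF // mule0 lte_fin => c_lt0.
  apply: filterS Z_ge0 => q Zq; apply: lt_le_trans c_lt0 _.
  have Mq := M_gt0 (N q).
  by rewrite divr_ge0 ?f_ge0 ?mulr_ge0 ?(ltW Mq) ?(ltW (g_gt0 _ Mq)).
have z_gt0 : 0 < z by rewrite lt_neqAle eq_sym z_neq0.
(* Bound the load from below by a fixed z' < z, at which regular variation applies. *)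
have [z' /andP[z'_gt0 z'z] ltc'] :
    exists2 z', 0 < z' < z & (c%:E < a * (z' `^ rho)%:E)%E.
  case Ea : a ltc => [r||] ltc; last by have := ratio_lim_ge0; rewrite Ea.
  - move: ltc; rewrite -EFinM lte_fin => /(exists_lt_mulr_gt (powR_gt0 _ z_gt0)).
    move=> [w /andP[w_gt0 wz] cw]; exists (w `^ rho^-1); last first.
      by rewrite powR_invK ?ltW // -EFinM lte_fin.
    rewrite powR_gt0 //= -(ltr_powR2r rho_gt0) ?nnegrE ?powR_ge0 //.
    by rewrite powR_invK ?ltW.
  - exists (z / 2); first by rewrite divr_gt0 //= ltr_pdivrMr // ltr_pMr // ltr1n.
    by rewrite gt0_mulye ?ltry // lte_fin powR_gt0 // divr_gt0.
have ev_ratio : \forall q \near Q, c < f (M (N q) * z') / g (M (N q)).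
  apply: (N_cvg [set n | c < f (M n * z') / g (M n)]).
  by apply: filterS (cvge_near_gt (cvg_ratio_scaled _ z'_gt0) ltc') => n; rewrite lte_fin.
apply: filterS2 ev_ratio (cvgr_gt _ Z_cvg _ z'z) => q ltq z'Z.
apply: lt_le_trans ltq _; have Mq := M_gt0 (N q).
rewrite ler_pM2r ?invr_gt0 ?g_gt0 //; apply: f_mono; first by rewrite mulr_ge0 ?ltW.
by rewrite ler_pM2l // ltW.
Qed.

Lemma ratio_limsup (Z : nat -> R) (z : R) : f 0 = 0 ->
  Z @ \oo --> z -> (forall n, 0 <= Z n) -> (a = +oo%E -> forall n, Z n = 0) -> 0 <= z ->
  forall c, (a * (z `^ rho)%:E < c%:E)%E -> \forall n \near \oo, f (M n * Z n) / g (M n) < c.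
Proof.
move=> f0 Z_cvg Z_ge0 Z_inf z_ge0 c ltc.
have a_ge0 := ratio_lim_ge0.
case Ea : a ltc a_ge0 Z_inf => [r||] ltc a_ge0 Z_inf //.
- move: ltc; rewrite -EFinM lte_fin => /exists_gt_mulr_lt[w zw rw].
  have w_ge0 : 0 <= w by apply: le_trans (ltW zw); exact: powR_ge0.
  have z_lt : z < w `^ rho^-1.
    by rewrite -(ltr_powR2r rho_gt0) ?nnegrE ?powR_ge0 ?powR_invK.
  have z'_gt0 : 0 < w `^ rho^-1 by apply: le_lt_trans z_lt.
  have lt_c : (a * ((w `^ rho^-1) `^ rho)%:E < c%:E)%E.
    by rewrite Ea -EFinM powR_invK // lte_fin.
  have ev_ratio : \forall n \near \oo, f (M n * w `^ rho^-1) / g (M n) < c.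
    by apply: filterS (cvge_near_lt (cvg_ratio_scaled _ z'_gt0) lt_c) => n; rewrite lte_fin.
  apply: filterS2 ev_ratio (cvgr_lt _ Z_cvg _ z_lt) => n ltn Zn.
  apply: le_lt_trans ltn; have Mn := M_gt0 n.
  rewrite ler_pM2r ?invr_gt0 ?g_gt0 //; apply: f_mono; first by rewrite mulr_ge0 ?Z_ge0 // ltW.
  by rewrite ler_pM2l // ltW.
- apply: nearW => n; rewrite Z_inf // mulr0 f0 mul0r -lte_fin.
  by apply: le_lt_trans ltc; rewrite mule_ge0 // lee_fin powR_ge0.
Qed.

End RegularVariation.

(** * Edge loads and allocations *)

Section Network.
Context {R : realType} {E I Pth : finType} (owner : Pth -> I) (route : Pth -> seq E).
Local Notation zeta := (zeta owner route).

Lemma zetaE (y : Pth -> R) (l : I -> R) e :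
  zeta y l e = \sum_(p | e \in route p) l (owner p) * y p.
Proof.
rewrite /zeta /zfl; under eq_bigr do rewrite big_distrr /=.
rewrite (partition_big owner predT) //=; apply: eq_bigr => i _.
by apply: eq_big => [p|p /andP[/eqP -> _]] //; rewrite andbC.
Qed.

Lemma xloadE (y : Pth -> R) (l : I -> R) (s : R) e :
  xload owner route y (fun i => s * l i) e = s * zeta y l e.
Proof. by rewrite /xload /zeta big_distrr; apply: eq_bigr => i _; rewrite /= mulrA. Qed.

Lemma zeta_ge_path {y : Pth -> R} {l : I -> R} {e p} :
  (forall p, 0 <= y p) -> (forall i, 0 <= l i) -> e \in route p ->
  l (owner p) * y p <= zeta y l e.
Proof.
move=> y0 l0 ep; rewrite zetaE (bigD1 p) //= lerDl.
by apply: sumr_ge0 => q _; rewrite mulr_ge0.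
Qed.

Lemma zeta_ge0 (y : Pth -> R) (l : I -> R) e :
  (forall p, 0 <= y p) -> (forall i, 0 <= l i) -> 0 <= zeta y l e.
Proof. by move=> y0 l0; rewrite zetaE sumr_ge0 // => p _; rewrite mulr_ge0. Qed.

Lemma cvg_zeta (T : Type) (F : set_system T) {FF : Filter F}
  (Y : T -> Pth -> R) (L : T -> I -> R) (y : Pth -> R) (l : I -> R) e :
  (forall p, Y t p @[t --> F] --> y p) -> (forall i, L t i @[t --> F] --> l i) ->
  zeta (Y t) (L t) e @[t --> F] --> zeta y l e.
Proof.
move=> Yy Ll; rewrite zetaE; under eq_fun do rewrite zetaE.
by apply: cvg_big => [|p _]; [exact: add_continuous | exact: cvgM].
Qed.

Lemma allocs_le1 {y : Pth -> R} : allocs owner y -> forall p, y p <= 1.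
Proof.
move=> [y0 y1] p; rewrite -(y1 (owner p)) (bigD1 p) //= lerDl.
by apply: sumr_ge0 => q _.
Qed.

Lemma closed_allocs : closed (allocs owner : set {ptws Pth -> R}).
Proof.
have -> : allocs owner = \bigcap_(p in setT) (proj p) @^-1` [set x : R | 0 <= x] `&`
    \bigcap_(i in setT) (fun y => \sum_(p | owner p == i) y p) @^-1` [set x : R | x = 1].
  apply/seteqP; split => y [y0 y1].
    by split=> [p|i] _; [exact: y0|exact: y1].
  by split=> [p|i]; [exact: (y0 p Logic.I)|exact: (y1 i Logic.I)].
apply: closedI; apply: closed_bigI => j _; apply: preimage_closed.
- by move=> y _; exact: proj_continuous.
- exact: closed_ge.
- move=> y _; apply: continuous_big => [|p _]; first exact: add_continuous.
  exact: proj_continuous.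
- exact: closed_eq.
Qed.

Lemma allocs_cvg {T : Type} {F : set_system T} {FF : ProperFilter F}
  {Y : T -> Pth -> R} {y : Pth -> R} :
  (\forall t \near F, allocs owner (Y t)) -> (forall p, Y t p @[t --> F] --> y p) ->
  allocs owner y.
Proof.
move=> YA Yy; split=> [p|i].
  apply: (closed_cvg [set x : R | 0 <= x] (@closed_ge _ 0) _ _ (Yy p)).
  by apply: filterS YA => t [Y0 _]; exact: Y0.
have sum_cvg : \sum_(p | owner p == i) Y t p @[t --> F] --> \sum_(p | owner p == i) y p.
  by apply: cvg_big => [|p _]; [exact: add_continuous | exact: Yy].
apply: (closed_cvg [set x : R | x = 1] (@closed_eq _ 1) _ _ sum_cvg).
by apply: filterS YA => t [_]; exact.
Qed.

Lemma compact_allocs : compact (allocs owner : set {ptws Pth -> R}).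
Proof.
apply: (subclosed_compact closed_allocs
  (tychonoff (fun _ : Pth => @segment_compact R 0 1))).
move=> y yA p; rewrite /= in_itv /=.
by rewrite (allocs_le1 yA) andbT; case: yA.
Qed.

Lemma alpha_path_ge (alpha : E -> \bar R) {p e} :
  e \in route p -> (alpha e <= alpha_path route alpha p)%E.
Proof. by move=> ep; apply: le_bigmax_seq. Qed.

Lemma exists_edge_alpha_path_le (alpha : E -> \bar R) p : (0 < alpha_path route alpha p)%E ->
  exists2 e, e \in route p & (alpha_path route alpha p <= alpha e)%E.
Proof.
move=> ap0.
have [//|none] := pselect (exists2 e, e \in route p & (alpha_path route alpha p <= alpha e)%E).
have : (alpha_path route alpha p < alpha_path route alpha p)%E.
  rewrite {1}/alpha_path big_seq; apply: bigmax_lt => // e ep.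
  by rewrite ltNge; apply/negP => ape; apply: none; exists e.
by rewrite ltxx.
Qed.

Lemma alpha_od_le_path (alpha : E -> \bar R) p :
  (alpha_od owner route alpha (owner p) <= alpha_path route alpha p)%E.
Proof. exact: bigmin_le_cond. Qed.

End Network.

(** * Asymptotics of the optimal cost *)

Section Asymptotics.
Context {R : realType} {omega : bool} {E I Pth : finType}
  {owner : Pth -> I} {route : Pth -> seq E} {ge : E -> R -> R}.
Hypotheses (Hge_mono : forall e x y, 0 <= x -> x <= y -> ge e x <= ge e y)
  (Hge_nonneg : forall e x, 0 <= x -> 0 <= ge e x) (Hge0 : forall e, ge e 0 = 0).
Context {g : R -> R} {rho : R}.
Hypotheses (Hrho : 0 < rho) (Hg_pos : forall x, 0 < x -> 0 < g x)
  (Hg_rv : forall x, 0 < x -> (fun t => g (t * x) / g t) @ omega_nbhs omega --> x `^ rho).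
Context {alpha : E -> \bar R}.
Hypothesis Halpha : forall e, (fun x => (ge e x / g x)%:E) @ omega_nbhs omega --> alpha e.
Context {M : nat -> R} {lam : nat -> I -> R} {lamlim : I -> R}.
Hypotheses (HM_pos : forall n, 0 < M n) (Hlam : forall n, simplex (lam n))
  (Hlamlim : simplex lamlim) (HM_cvg : M @ \oo --> omega_nbhs omega)
  (Hlam_cvg : forall i, (fun n => lam n i) @ \oo --> lamlim i)
  (Hb : forall i, exists p, owner p = i /\ (alpha_path route alpha p < +oo)%E)
  (Hc : exists i, (0 < alpha_od owner route alpha i < +oo)%E /\ 0 < lamlim i).

Local Notation zeta := (zeta owner route).
Local Notation allocs := (allocs owner).
Local Notation Vo := (Vobj owner route alpha rho lamlim).
Local Notation Vr := (Vrho owner route alpha rho lamlim).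
Local Notation cost n := (cost owner route ge (fun i => M n * lam n i)).
Local Notation G n := (Gopt owner route ge (fun i => M n * lam n i)).

Let lam_ge0 n i : 0 <= lam n i. Proof. by case: (Hlam n). Qed.
Let lamlim_ge0 i : 0 <= lamlim i. Proof. by case: Hlamlim. Qed.

Lemma alpha_ge0 e : (0 <= alpha e)%E.
Proof. by have := ratio_lim_ge0 Hg_pos (Hge_nonneg e) (Halpha e). Qed.

Lemma Vobj_term_ge0 (y : Pth -> R) e : (0 <= alpha e * ((zeta y lamlim e) `^ rho)%:E)%E.
Proof. by rewrite mule_ge0 ?alpha_ge0 // lee_fin powR_ge0. Qed.

Lemma cost_ratioE n (y : Pth -> R) :
  cost n y / g (M n) = \sum_e ge e (M n * zeta y (lam n) e) / g (M n).
Proof. by rewrite /Defs.cost mulr_suml; apply: eq_bigr => e _; rewrite xloadE. Qed.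

Definition avoids_infinite_edges (y : Pth -> R) :=
  forall p e, alpha e = +oo%E -> e \in route p -> y p = 0.

Lemma zeta_infinite_edge (y : Pth -> R) (l : I -> R) e :
  avoids_infinite_edges y -> alpha e = +oo%E -> zeta y l e = 0.
Proof. by move=> yav ae; rewrite zetaE big1 // => p ep; rewrite (yav p e) ?mulr0. Qed.

Lemma Vobj_lt_pinfty {y : Pth -> R} : avoids_infinite_edges y -> (Vo y < +oo)%E.
Proof.
move=> yav; apply: lte_sum_pinfty => e _.
case Ea : (alpha e) => [r||]; first by rewrite -EFinM ltry.
  by rewrite zeta_infinite_edge // powR0 ?gt_eqF // mule0 ltry.
by have := alpha_ge0 e; rewrite Ea.
Qed.

Lemma exists_avoiding_alloc : exists2 y, allocs y & avoids_infinite_edges y.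
Proof.
have [pk pkP] := choice Hb.
exists (fun p => (p == pk (owner p))%:R).
  split=> [p|i]; first by case: (p == _).
  by rewrite (bigD1 (pk i)) ?(pkP i).1 //= eqxx big1 ?addr0 // => p /andP[/eqP <- /negbTE ->].
move=> p e ae ep; case: eqP => // ppk.
by have := alpha_path_ge route alpha ep; rewrite ae ppk leNgt (pkP (owner p)).2.
Qed.

Lemma Vrho_le_Vobj {y : Pth -> R} : allocs y -> (Vr <= Vo y)%E.
Proof. by move=> yA; apply: ereal_inf_lbound; exists y. Qed.

Lemma Vobj_uniform_lower_bound : exists2 k, 0 < k & forall y, allocs y -> (k%:E <= Vo y)%E.
Proof.
(* Some path of the OD pair given by (c) carries at least 1/(#|Pth|+1) of its demand,
   and one of its edges has alpha_e >= alpha^i > 0. *)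
have [i [/andP[od_gt0 od_lt] li_gt0]] := Hc.
case Eod : (alpha_od owner route alpha i) od_gt0 od_lt => [a||] // a_gt0 _.
rewrite lte_fin in a_gt0; set s := lamlim i / (#|Pth|%:R + 1).
have s_gt0 : 0 < s by rewrite divr_gt0 // ltr_wpDl.
exists (a * s `^ rho); first by rewrite mulr_gt0 // powR_gt0.
move=> y yA; have [p /eqP pi yp] := exists_summand_ge (yA.2 i).
have /exists_edge_alpha_path_le[e ep ape] : (0 < alpha_path route alpha p)%E.
  by apply: lt_le_trans (alpha_od_le_path owner route alpha p); rewrite pi Eod lte_fin.
have s_le : s <= zeta y lamlim e.
  apply: le_trans (zeta_ge_path owner route yA.1 lamlim_ge0 ep).
  by rewrite /s pi ler_wpM2l.
rewrite /Vobj (bigD1 e) //=; apply: (le_trans _ (leeDl _ _)); last first.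
  by apply: sume_ge0 => e' _; exact: Vobj_term_ge0.
rewrite EFinM; apply: lee_pmul.
- by rewrite lee_fin ltW.
- by rewrite lee_fin powR_ge0.
- by rewrite -Eod -pi; exact: le_trans (alpha_od_le_path owner route alpha p) ape.
- rewrite lee_fin; apply: ge0_ler_powR; rewrite ?nnegrE ?(ltW Hrho) ?(ltW s_gt0) //.
  exact: le_trans (ltW s_gt0) s_le.
Qed.

Lemma Vrho_fin_gt0 : exists2 v, 0 < v & Vr = v%:E.
Proof.
have [k k_gt0 Vk] := Vobj_uniform_lower_bound; have [y0 y0A y0av] := exists_avoiding_alloc.
have Vr_ge : (k%:E <= Vr)%E by apply/ereal_infP => _ [y yA <-]; exact: Vk.
have Vr_fin : Vr \is a fin_num.
  rewrite ge0_fin_numE; first exact: le_lt_trans (Vrho_le_Vobj y0A) (Vobj_lt_pinfty y0av).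
  by apply: le_trans _ Vr_ge; rewrite lee_fin ltW.
exists (fine Vr); last by rewrite fineK.
by rewrite -lte_fin fineK // (lt_le_trans _ Vr_ge) ?lte_fin.
Qed.

Lemma exists_avoiding_alloc_same_Vobj {y : Pth -> R} : allocs y -> (Vo y < +oo)%E ->
  exists2 y', allocs y' /\ avoids_infinite_edges y' & Vo y' = Vo y.
Proof.
(* Flow of OD pairs with lamlim i = 0 does not enter Vobj and is rerouted as in y0;
   for the other pairs, finiteness of Vobj already keeps it off edges with alpha_e = +oo. *)
move=> yA Vy_fin; have [y0 y0A y0av] := exists_avoiding_alloc.
pose y' p := if 0 < lamlim (owner p) then y p else y0 p.
have zeta_y' e : zeta y' lamlim e = zeta y lamlim e.
  rewrite !zetaE; apply: eq_bigr => p _; rewrite /y'; case: ifPn => // /negP.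
  by rewrite lt_neqAle lamlim_ge0 andbT => /negP; rewrite negbK => /eqP <-; rewrite !mul0r.
exists y'; last by apply: eq_bigr => e _; rewrite zeta_y'.
split.
  split=> [p|i]; first by rewrite /y'; case: ifP => _; [exact: yA.1 | exact: y0A.1].
  by case: (boolP (0 < lamlim i)) => li; [rewrite -(yA.2 i) | rewrite -(y0A.2 i)];
    apply: eq_bigr => p /eqP op; rewrite /y' op ?li ?(negbTE li).
move=> p e ae ep; rewrite /y'; case: ifPn => [lp|_]; last exact: y0av ae ep.
have fin_e : (alpha e * ((zeta y lamlim e) `^ rho)%:E < +oo)%E.
  apply: le_lt_trans Vy_fin; rewrite /Vobj (bigD1 e) //= leeDl //.
  by apply: sume_ge0 => e' _; exact: Vobj_term_ge0.
have ze0 : zeta y lamlim e = 0.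
  apply/eqP; apply: contraTT fin_e => znz.
  rewrite ae gt0_mulye ?ltxx // lte_fin powR_gt0 // lt_neqAle eq_sym znz.
  by rewrite zeta_ge0 //; exact: yA.1.
have : lamlim (owner p) * y p <= 0 by rewrite -ze0 zeta_ge_path //; exact: yA.1.
by rewrite pmulr_rle0 // => yp0; apply/eqP; rewrite eq_le yp0 yA.1.
Qed.

Lemma cost_ratio_limsup {y : Pth -> R} : allocs y -> avoids_infinite_edges y ->
  forall c, (Vo y < c%:E)%E -> \forall n \near \oo, cost n y / g (M n) < c.
Proof.
move=> yA yav c Vc.
suff : \forall n \near \oo, \sum_e ge e (M n * zeta y (lam n) e) / g (M n) < c.
  by apply: filterS => n; rewrite cost_ratioE.
apply: (near_sume_lt (Vobj_term_ge0 y) _ _ Vc) => e c' ltc'.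
apply: (ratio_limsup Hrho Hg_pos Hg_rv HM_pos HM_cvg (Hge_nonneg e) (Hge_mono e)
  (Halpha e) _ _ (Hge0 e) _ _ _ _ _ ltc').
- by apply: cvg_zeta => [p|i]; [exact: cvg_cst | exact: Hlam_cvg].
- by move=> n; apply: zeta_ge0 => //; exact: yA.1.
- by move=> ae n; exact: zeta_infinite_edge.
- by apply: zeta_ge0 => //; exact: yA.1.
Qed.

Lemma cost_ratio_liminf {T : Type} {Q : set_system T} {FQ : Filter Q}
  {N : T -> nat} {Y : T -> Pth -> R} {y : Pth -> R} :
  N @ Q --> \oo -> (forall p, Y q p @[q --> Q] --> y p) ->
  (\forall q \near Q, forall p, 0 <= Y q p) -> (forall p, 0 <= y p) ->
  forall c, (c%:E < Vo y)%E -> \forall q \near Q, c < cost (N q) (Y q) / g (M (N q)).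
Proof.
move=> N_cvg Yy Y_ge0 y_ge0 c Vc.
suff : \forall q \near Q, c < \sum_e ge e (M (N q) * zeta (Y q) (lam (N q)) e) / g (M (N q)).
  by apply: filterS => q; rewrite cost_ratioE.
apply: (near_sume_gt (Vobj_term_ge0 y) _ _ Vc) => e c' ltc'.
apply: (ratio_liminf Hrho Hg_pos Hg_rv HM_pos HM_cvg (Hge_nonneg e) (Hge_mono e)
  (Halpha e) _ _ _ _ _ N_cvg _ _ _ _ ltc').
- by apply: cvg_zeta => // i; exact: cvg_comp _ _ N_cvg (Hlam_cvg i).
- by apply: filterS Y_ge0 => q Yq; exact: zeta_ge0.
- exact: zeta_ge0.
Qed.

Lemma cost_ge0 n (y : Pth -> R) : allocs y -> 0 <= cost n y.
Proof.
move=> yA; apply: sumr_ge0 => e _; apply: Hge_nonneg; rewrite xloadE.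
by rewrite mulr_ge0 ?(ltW (HM_pos n)) // zeta_ge0 //; exact: yA.1.
Qed.

Lemma Gopt_le_cost n (y : Pth -> R) : allocs y -> G n <= cost n y.
Proof.
move=> yA; apply: ge_inf; last by exists y.
by exists 0 => _ [z zA <-]; exact: cost_ge0.
Qed.

Lemma Gopt_ge n c : (forall y, allocs y -> c <= cost n y) -> c <= G n.
Proof.
move=> c_le; have [y0 y0A _] := exists_avoiding_alloc.
by apply: lb_le_inf; [exists (cost n y0), y0 | move=> _ [y yA <-]; exact: c_le].
Qed.

Lemma Gopt_ratio_limsup c : (Vr < c%:E)%E -> \forall n \near \oo, G n / g (M n) < c.
Proof.
move=> /ereal_inf_lt[_ [y yA <-] Vyc].
have [y' [y'A y'av] Vy'] := exists_avoiding_alloc_same_Vobj yA (lt_trans Vyc (ltry c)).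
rewrite -Vy' in Vyc; apply: filterS (cost_ratio_limsup y'A y'av _ Vyc) => n.
by apply: le_lt_trans; rewrite ler_pM2r ?invr_gt0 ?Hg_pos // Gopt_le_cost.
Qed.

Lemma Gopt_ratio_liminf c : (c%:E < Vr)%E -> \forall n \near \oo, c < G n / g (M n).
Proof.
move=> /lte_dense_EFin[c' cc' c'V].
(* The liminf bound holds uniformly on the compact set of allocations. *)
have cover := (near_covering_withinP _).2
  ((compact_near_coveringP _).1 (compact_allocs (R := R) owner)).
have : \forall n \near \oo, allocs `<=` (fun y => c' < cost n y / g (M n)).
  apply: (cover nat \oo (fun n (y : {ptws Pth -> R}) => c' < cost n y / g (M n)) _) => y yA.
  apply: (cost_ratio_liminf (Q := within (fun q : {ptws Pth -> R} * nat => allocs q.1)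
    (filter_prod (nbhs y) \oo))).
  - exact: cvg_within_filter cvg_snd.
  - move=> p; apply: cvg_within_filter.
    have fst_cvg : (fun q : {ptws Pth -> R} * nat => q.1) @ filter_prod (nbhs y) \oo --> y.
      exact: cvg_fst.
    have := cvg_comp _ _ fst_cvg (@proj_continuous Pth (fun=> R) p y); exact.
  - by apply: filterS (near_withinT _ _) => q qA; exact: qA.1.
  - exact: yA.1.
  - exact: lt_le_trans c'V (Vrho_le_Vobj yA).
apply: filterS => n c'_le; apply: lt_le_trans cc' _.
rewrite ler_pdivlMr ?Hg_pos //; apply: Gopt_ge => y yA.
by rewrite -ler_pdivlMr ?Hg_pos // ltW // c'_le.
Qed.

Lemma Gopt_ratio_cvg :
  exists v : R, [/\ 0 < v, Vr = v%:E & (fun n => G n / g (M n)) @ \oo --> v].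
Proof.
have [v v_gt0 Vrv] := Vrho_fin_gt0; exists v; split => //.
apply/cvgrPdist_lt => eps eps_gt0.
have lo := Gopt_ratio_liminf (v - eps); have up := Gopt_ratio_limsup (v + eps).
rewrite Vrv !lte_fin gtrBl ltrDl eps_gt0 in lo up.
by apply: filterS2 (lo isT) (up isT) => n h1 h2; rewrite ltr_distlC h1 h2.
Qed.

Lemma Gopt_limit_points_optimal (ybar : nat -> Pth -> R) :
  (forall n, allocs (ybar n)) -> (forall n, cost n (ybar n) = G n) ->
  forall (ystar : Pth -> R) (phi : nat -> nat),
  {homo phi : k l / (k < l)%N >-> (k < l)%N} ->
  (forall p, (fun k => ybar (phi k) p) @ \oo --> ystar p) ->
  allocs ystar /\ Vo ystar = Vr.
Proof.
move=> ybarA ybar_opt ystar phi phi_incr ycvg.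
have phi_cvg : phi @ \oo --> \oo.
  have phi_ge k : (k <= phi k)%N.
    by elim: k => // k IH; apply: leq_ltn_trans IH (phi_incr _ _ _).
  move=> S [k0 _ S_ge]; exists k0 => // k /= k0k.
  by apply: S_ge; exact: leq_trans k0k (phi_ge k).
have ystarA : allocs ystar.
  apply: (allocs_cvg owner (F := \oo) (Y := fun k => ybar (phi k))) => //.
  exact: nearW.
split => //; apply/eqP; rewrite eq_le Vrho_le_Vobj // andbT.
have [v [_ Vrv Gcvg]] := Gopt_ratio_cvg.
rewrite Vrv leNgt; apply/negP => /lte_dense_EFin[c vc cV].
have ybar_ge0 : \forall k \near \oo, forall p, 0 <= ybar (phi k) p.
  by apply: nearW => k; exact: (ybarA (phi k)).1.
have lo : \forall k \near \oo, c < cost (phi k) (ybar (phi k)) / g (M (phi k)).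
  exact: cost_ratio_liminf phi_cvg ycvg ybar_ge0 ystarA.1 _ cV.
have up : \forall k \near \oo, G (phi k) / g (M (phi k)) < c.
  exact: cvgr_lt _ (cvg_comp _ _ phi_cvg Gcvg) _ vc.
have [k [/= lok upk]] := filter_ex (filterI lo up).
by move: lok; rewrite ybar_opt => /(lt_trans upk); rewrite ltxx.
Qed.

End Asymptotics.

Theorem lemmaB3 (R : realType) (omega : bool)
  (V E I Pth : finType) (tail head : E -> V) (orig dest : I -> V)
  (owner : Pth -> I) (route : Pth -> seq E)
  (* network: each path of P^i is an edge-simple walk from orig i to dest i *)
  (Hwalk : forall p, walk_from tail head (orig (owner p)) (route p) (dest (owner p)))
  (Hsimple : forall p, uniq (route p))
  (Hroute_inj : injective route)
  (Hnonempty : forall i : I, exists p : Pth, owner p = i)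
  (* edge cost functions *)
  (ge : E -> R -> R)
  (Hge_mono : forall e x y, 0 <= x -> x <= y -> ge e x <= ge e y)
  (Hge_nonneg : forall e x, 0 <= x -> 0 <= ge e x)
  (Hge0 : forall e, ge e 0 = 0)
  (* g : (0,oo) -> (0,oo), rho-regularly varying at omega *)
  (g : R -> R) (rho : R) (Hrho : 0 < rho)
  (Hg_pos : forall x, 0 < x -> 0 < g x)
  (Hg_rv : forall x, 0 < x ->
     (fun t => g (t * x) / g t) @ omega_nbhs omega --> x `^ rho)
  (alpha : E -> \bar R)
  (Halpha : forall e, (fun x => (ge e x / g x)%:E) @ omega_nbhs omega --> alpha e)
  (* inflows m_n = M_n lambda_n *)
  (M : nat -> R) (lam : nat -> I -> R) (lamlim : I -> R)
  (HM_pos : forall n, 0 < M n)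
  (Hlam : forall n, simplex (lam n))
  (Hlamlim : simplex lamlim)
  (HM_cvg : M @ \oo --> omega_nbhs omega)
  (Hlam_cvg : forall i, (fun n => lam n i) @ \oo --> lamlim i)
  (Hb : forall i, exists p, owner p = i /\ (alpha_path route alpha p < +oo)%E)
  (Hc : exists i, (0 < alpha_od owner route alpha i < +oo)%E /\ 0 < lamlim i) :
  let m n := fun i => M n * lam n i in
  let G n := Gopt owner route ge (m n) in
  (exists v : R,
     [/\ 0 < v, Vrho owner route alpha rho lamlim = v%:E &
         (fun n => G n / g (M n)) @ \oo --> v])
  /\
  (forall (ybar : nat -> Pth -> R),
     (forall n, allocs owner (ybar n)) ->
     (forall n, cost owner route ge (m n) (ybar n) = G n) ->
     forall (ystar : Pth -> R) (phi : nat -> nat),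
       {homo phi : k l / (k < l)%N >-> (k < l)%N} ->
       (forall p, (fun k => ybar (phi k) p) @ \oo --> ystar p) ->
       allocs owner ystar /\
       Vobj owner route alpha rho lamlim ystar = Vrho owner route alpha rho lamlim).
Proof.
move=> m G; split.
  have := Gopt_ratio_cvg Hge_mono Hge_nonneg Hge0 Hrho Hg_pos Hg_rv Halpha
    HM_pos Hlam Hlamlim HM_cvg Hlam_cvg Hb Hc; exact.
have := Gopt_limit_points_optimal Hge_mono Hge_nonneg Hge0 Hrho Hg_pos Hg_rv Halpha
  HM_pos Hlam Hlamlim HM_cvg Hlam_cvg Hb Hc; exact.
Qed.
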